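(* Let $G$ be a graph with $n$ nodes, GSO $\mathbf{\Delta}\in\mathbb{R}^{n\times n}$ and GWM $\boldsymbol{A}=n\mathbf{\Delta}$. Let $h:\mathbb{R}\to\mathbb{R}$ be continuous with $h(0)=0$. Then $h(T_{W_{\boldsymbol{A}}})=T_{W_{nh(\mathbf{\Delta})}}$ as operators on $L^2[0,1]$.
   Context: A graph with graph shift operator (GSO) is a triple $G=(V,E,\mathbf{\Delta})$ with $V=\{1,\dots,n\}$ and $\mathbf{\Delta}\in\mathbb{R}^{n\times n}$ symmetric; its graph weight matrix (GWM) is $\boldsymbol{A}=n\mathbf{\Delta}$. For a continuous $h:\mathbb{R}\to\mathbb{R}$ and a symmetric matrix or bounded self-adjoint operator $T$, $h(T)$ is defined by continuous functional calculus (for $\mathbf{\Delta}$ with orthonormal eigenpairs $(\lambda_j,\phi_j)$: $h(\mathbf{\Delta})\mathbf{x}=\sum_j h(\lambda_j)\langle\mathbf{x},\phi_j\rangle\phi_j$; for a compact self-adjoint operator with an orthonormal eigenbasis $(\phi_j)$, including kernel vectors, $h(T)\psi=\sum_j h(\lambda_j)\langle\psi,\phi_j\rangle\phi_j$). For $n\in\mathbb{N}$ let $P_k=[(k-1)/n,k/n)$, $k=1,\dots,n$. For $\boldsymbol{B}\in\mathbb{R}^{n\times n}$ the induced graphon is $W_{\boldsymbol{B}}(u,v)=\sum_{i,j}\boldsymbol{B}_{ij}\chi_{P_i}(u)\chi_{P_j}(v)$; thus $W_{nh(\mathbf{\Delta})}$ is the graphon induced by the matrix $nh(\mathbf{\Delta})$.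 For a bounded symmetric measurable $W:[0,1]^2\to\mathbb{R}$, $T_W\psi(v)=\int_0^1W(v,u)\psi(u)\,du$ on $L^2[0,1]$. *)

From HB Require Import structures.
From mathcomp Require Import all_boot all_order all_algebra.
From mathcomp Require Import all_classical all_reals all_analysis.
Set Implicit Arguments. Unset Strict Implicit. Unset Printing Implicit Defensive.
Import Order.TTheory GRing.Theory Num.Theory.
Import numFieldNormedType.Exports.
Local Open Scope classical_set_scope.
Local Open Scope ring_scope.

Section Defs.
Variable R : realType.
Local Notation mu := (@lebesgue_measure R).
Local Notation I01 := (`[(0:R), 1]%classic).

(* psi is in L^2[0,1] (functions R -> R, only values on [0,1] matter) *)
Definition L2 (psi : R -> R) : Prop :=
  measurable_fun I01 psi /\
  (\int[mu]_(x in I01) ((psi x) ^+ 2)%:E < +oo)%E.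

Definition ip (f g : R -> R) : R := Rintegral mu I01 (fun x => f x * g x).

Definition l2dist2 (f g : R -> R) : R :=
  Rintegral mu I01 (fun x => (f x - g x) ^+ 2).

Definition ae_eq01 (f g : R -> R) : Prop :=
  {ae mu, forall x, I01 x -> f x = g x}.

(* characteristic function of P_k = [(k-1)/n, k/n), here 0-based: [i/n,(i+1)/n) *)
Definition chiP (n : nat) (i : 'I_n) (u : R) : R :=
  ((i%:R / n%:R <= u) && (u < i.+1%:R / n%:R))%:R.

Definition graphon_of (n : nat) (B : 'M[R]_n) (u v : R) : R :=
  \sum_(i < n) \sum_(j < n) B i j * chiP i u * chiP j v.

Definition T_op (W : R -> R -> R) (psi : R -> R) : R -> R :=
  fun v => Rintegral mu I01 (fun u => W v u * psi u).

Definition ON_eigenbasis (W : R -> R -> R) (phi : nat -> R -> R) (lam : nat -> R)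
  : Prop :=
  (forall j, L2 (phi j)) /\
  (forall i j, ip (phi i) (phi j) = (i == j)%:R) /\
  (forall psi, L2 psi -> (forall j, ip psi (phi j) = 0) -> ae_eq01 psi (fun _ => 0)) /\
  (forall j, ae_eq01 (T_op W (phi j)) (fun v => lam j * phi j v)).

(* partial sums of h(T) psi = sum_j h(lam_j) <psi,phi_j> phi_j *)
Definition fc_partial (h : R -> R) (phi : nat -> R -> R) (lam : nat -> R)
  (psi : R -> R) (N : nat) : R -> R :=
  fun x => \sum_(j < N) h (lam j) * ip psi (phi j) * phi j x.

Definition mx_ON_eigenbasis (n : nat) (D U : 'M[R]_n) (lam : 'I_n -> R) : Prop :=
  U^T *m U = 1%:M /\ D *m U = U *m diag_mx (\row_j lam j).

(* h(Delta) x = sum_j h(lam_j) <x,phi_j> phi_j, i.e. sum_j h(lam_j) phi_j phi_j^T *)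
Definition mx_fun (n : nat) (h : R -> R) (U : 'M[R]_n) (lam : 'I_n -> R)
  : 'M[R]_n :=
  \sum_(j < n) h (lam j) *: (col j U *m (col j U)^T).

End Defs.

(* Every induced graphon W_B is a step kernel, so T_{W_B} g is the step function
   sum_i (B c)_i chi_{P_i} with c_i = <g, chi_{P_i}>.  Taking such coefficients
   of the eigen-equation shows that c_j := (<phi_j, chi_{P_i}>)_i satisfies
   Delta c_j = lam_j c_j, and that phi_j is the step function with coefficients
   n c_j whenever lam_j <> 0.  The vectors n c_k (lam_k <> 0) are then
   biorthogonal to the c_j, so at most n eigenvalues are nonzero and, as
   h(0) = 0, the partial sums of h(T) psi are eventually the step function with
   coefficients sum_k h(lam_k) <n c_k, c> n c_k (c the coefficients of psi).
   That vector equals n h(Delta) c: the difference is orthogonal to every c_j,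
   and completeness of (phi_j) forces such a vector to vanish. *)

From HB Require Import structures.
From mathcomp Require Import all_boot all_order all_algebra.
From mathcomp Require Import all_classical all_reals all_analysis.
From mathcomp Require Import measurable_realfun ring lra.
Set Implicit Arguments. Unset Strict Implicit. Unset Printing Implicit Defensive.
Import Order.TTheory GRing.Theory Num.Theory.
Import numFieldNormedType.Exports.
Local Open Scope classical_set_scope.
Local Open Scope ring_scope.

Section Rintegral_lemmas.
Context d (T : measurableType d) (R : realType).
Variables (mu : {measure set T -> \bar R}) (D : set T).
Hypothesis mD : measurable D.

Lemma integrable_sumr (I : Type) (s : seq I) (F : I -> T -> R) :
  (forall i, mu.-integrable D (EFin \o F i)) ->
  mu.-integrable D (EFin \o (fun x => \sum_(i <- s) F i x)).
Proof.
move=> iF; apply: eq_integrable (integrable_sum mD s (P := xpredT) (fun i _ => iF i)) => //.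
by move=> x _; rewrite /= sumEFin.
Qed.

Lemma integrableZl_EFin (k : R) (f : T -> R) :
  mu.-integrable D (EFin \o f) -> mu.-integrable D (EFin \o (fun x => k * f x)).
Proof.
move=> fi; apply: (eq_integrable mD _ _ _ (integrableZl mD k fi)).
by move=> x _; rewrite /= EFinM.
Qed.

Lemma Rintegral_sum (I : Type) (s : seq I) (F : I -> T -> R) :
  (forall i, mu.-integrable D (EFin \o F i)) ->
  Rintegral mu D (fun x => \sum_(i <- s) F i x) =
  \sum_(i <- s) Rintegral mu D (F i).
Proof.
move=> iF; elim: s => [|a s IHs].
  by under eq_Rintegral do rewrite big_nil; rewrite big_nil Rintegral_cst ?mul0r.
under eq_Rintegral do rewrite big_cons.
by rewrite RintegralD ?IHs ?big_cons //; exact: integrable_sumr.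
Qed.

Lemma ae_eq_Rintegral (f g : T -> R) :
  measurable_fun D f -> measurable_fun D g -> ae_eq mu D f g ->
  Rintegral mu D f = Rintegral mu D g.
Proof.
move=> mf mg fg; congr fine; apply: ae_eq_integral => //; try exact/measurable_EFinP.
by move: fg; apply: filterS => x fgx Dx; rewrite fgx.
Qed.

End Rintegral_lemmas.

Lemma measurable_I01 {R : realType} :
  measurable (`[(0:R), 1]%classic : set (measurableTypeR R)).
Proof. exact: measurable_itv. Qed.
#[local] Hint Resolve measurable_I01 : core.

(* The library's generic hint does not fire for [lebesgue_measure]. *)
Instance lebesgue_ae_filter (R : realType) :
  Filter (almost_everywhere (@lebesgue_measure R)).
Proof. exact: ae_filter_ringOfSetsType. Qed.

Section unit_interval.
Variable R : realType.
Local Notation mu := (@lebesgue_measure R).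
Local Notation I01 := (`[(0:R), 1]%classic).
Local Notation integrable01 f := (mu.-integrable I01 (EFin \o f)).

Lemma integrable01_cst (k : R) : integrable01 (fun _ => k).
Proof.
have I01_int : integrable01 \1_I01.
  by apply: integrableS (@integrable_indic_itv R 0 1 true false).
apply: (eq_integrable measurable_I01 _ _ _ (integrableZl measurable_I01 k I01_int)).
by move=> x /[!inE] Ix; rewrite /= indicE mem_set // mule1.
Qed.

Lemma integrable01_bounded (f : R -> R) (B : R) : measurable_fun I01 f ->
  (forall x, I01 x -> `|f x| <= B) -> integrable01 f.
Proof.
move=> mf fB; apply: le_integrable (integrable01_cst B) => //.
  exact/measurable_EFinP.
by move=> x Ix; rewrite /= lee_fin (le_trans (fB x Ix)) // ler_norm.
Qed.

Lemma L2_integrable (f : R -> R) : L2 f -> integrable01 f.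
Proof.
move=> [mf f2_fin].
have f2_int : integrable01 (fun x => f x ^+ 2).
  apply/integrableP; split; first exact/measurable_EFinP/measurable_funX.
  have mf2 : measurable_fun I01 (EFin \o (fun x => f x ^+ 2)).
    by apply/measurable_EFinP; exact: measurable_funX.
  apply: le_lt_trans f2_fin; apply: ge0_le_integral => //.
  - exact: measurableT_comp.
  - by move=> x _ /=; rewrite lee_fin ger0_norm // sqr_ge0.
apply: le_integrable (integrableD measurable_I01 (integrable01_cst 1) f2_int) => //.
  exact/measurable_EFinP.
move=> x _ /=; rewrite lee_fin [X in _ <= X]ger0_norm ?addr_ge0 ?sqr_ge0 //.
rewrite -real_normK ?num_real //; have := normr_ge0 (f x); nra.
Qed.

Lemma ipC (f g : R -> R) : ip f g = ip g f.
Proof. by apply: eq_Rintegral => x _; rewrite mulrC. Qed.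

Lemma l2dist2_ae_eq (f g : R -> R) : measurable_fun I01 f -> measurable_fun I01 g ->
  ae_eq01 f g -> l2dist2 f g = 0.
Proof.
move=> mf mg fg; rewrite /l2dist2 (@ae_eq_Rintegral _ _ _ _ _ _ _ (fun _ => 0)) //.
- by rewrite Rintegral_cst // mul0r.
- by apply: measurable_funX; apply: measurable_funB.
by move: fg; apply: filterS => x fgx Ix; rewrite fgx // subrr expr0n.
Qed.

End unit_interval.

Section vdot.
Variables (R : comPzRingType) (n : nat).
Implicit Types (a b c : 'cV[R]_n) (M : 'M[R]_n).

Definition vdot a b : R := (a^T *m b) 0 0.

Lemma vdotE a b : vdot a b = \sum_i a i 0 * b i 0.
Proof. by rewrite /vdot !mxE; apply: eq_bigr => i _; rewrite mxE. Qed.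

Lemma vdotC a b : vdot a b = vdot b a.
Proof. by rewrite !vdotE; apply: eq_bigr => i _; rewrite mulrC. Qed.

Lemma vdotZl k a b : vdot (k *: a) b = k * vdot a b.
Proof. by rewrite /vdot linearZ -scalemxAl mxE. Qed.

Lemma vdotBl a b c : vdot (a - b) c = vdot a c - vdot b c.
Proof. by rewrite !vdotE -sumrB; apply: eq_bigr => i _; rewrite !mxE mulrBl. Qed.

Lemma vdot_suml (I : Type) (r : seq I) (F : I -> 'cV[R]_n) c :
  vdot (\sum_(i <- r) F i) c = \sum_(i <- r) vdot (F i) c.
Proof. by rewrite /vdot linear_sum mulmx_suml summxE. Qed.

Lemma vdot_mulmxr M a b : vdot a (M *m b) = vdot (M^T *m a) b.
Proof. by rewrite /vdot trmx_mul trmxK mulmxA. Qed.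

End vdot.

Lemma biorthogonal_card_le (R : fieldType) (m n : nat) (a b : 'I_m -> 'cV[R]_n) :
  (forall i j, vdot (a i) (b j) = (i == j)%:R) -> (m <= n)%N.
Proof.
move=> ab; pose A := \matrix_(i, k) a i k 0; pose B := \matrix_(i, k) b i k 0.
have AB : A *m B^T = 1%:M.
  apply/matrixP => i j; rewrite !mxE -ab vdotE.
  by apply: eq_bigr => k _; rewrite !mxE.
have : row_free A by apply/row_freeP; exists B^T.
by rewrite /row_free => /eqP <-; exact: rank_leq_col.
Qed.

Lemma bounded_count_eventually_false (P : pred nat) (m : nat) :
  (forall N, count P (iota 0 N) <= m)%N -> exists N0, forall j, (N0 <= j)%N -> ~~ P j.
Proof.
move=> countP; apply: contrapT => /forallNP noN0.
have count_mono K L : (K <= L -> count P (iota 0 K) <= count P (iota 0 L))%N.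
  by move=> KL; rewrite -(subnKC KL) iotaD count_cat leq_addr.
suff : exists K, (m < count P (iota 0 K))%N by case=> K; rewrite ltnNge countP.
elim: m.+1 => [|k [K kK]]; first by exists 0%N.
have [j /andP[Kj Pj]] : exists j, (K <= j)%N && P j.
  apply: contrapT => /forallNP noj; apply: (noN0 K) => j Kj.
  by apply/negP => Pj; apply: (noj j); rewrite Kj.
exists j.+1; rewrite -[j.+1]addn1 iotaD count_cat /= Pj addn0 addn1 ltnS.
exact: leq_trans kK (count_mono _ _ Kj).
Qed.

Section matrix_functional_calculus.
Variables (R : realType) (n : nat) (h : R -> R) (U : 'M[R]_n) (mu_ : 'I_n -> R).

Lemma mx_funE : mx_fun h U mu_ = U *m diag_mx (\row_k h (mu_ k)) *m U^T.
Proof.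
apply/matrixP => i l; rewrite /mx_fun summxE mul_mx_diag !mxE.
by apply: eq_bigr => k _; rewrite !mxE big_ord1 !mxE mulrCA mulrA.
Qed.

Lemma tr_mx_fun : (mx_fun h U mu_)^T = mx_fun h U mu_.
Proof. by rewrite mx_funE !trmx_mul trmxK tr_diag_mx mulmxA. Qed.

Lemma mx_fun_eigenvector (D : 'M[R]_n) (v : 'cV[R]_n) (l : R) :
  D^T = D -> mx_ON_eigenbasis D U mu_ -> D *m v = l *: v ->
  mx_fun h U mu_ *m v = h l *: v.
Proof.
move=> symD [UtU DU] Dv; have UUt : U *m U^T = 1%:M by apply: mulmx1C.
have UtD : U^T *m D = diag_mx (\row_k mu_ k) *m U^T.
  by rewrite -symD -trmx_mul DU trmx_mul tr_diag_mx.
set s := U^T *m v.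
have eig_s k : mu_ k * s k 0 = l * s k 0.
  have : (U^T *m (D *m v)) k 0 = (U^T *m (l *: v)) k 0 by rewrite Dv.
  by rewrite mulmxA UtD -mulmxA mul_diag_mx -scalemxAr !mxE.
have hs : diag_mx (\row_k h (mu_ k)) *m s = h l *: s.
  apply/matrixP => k j; rewrite (ord1 j) mul_diag_mx [in RHS]mxE mxE.
  have [<-|mu_l] := eqVneq (mu_ k) l; first by rewrite mxE.
  suff -> : s k 0 = 0 by rewrite !mulr0.
  apply/eqP; move: (eig_s k) => /eqP; rewrite -subr_eq0 -mulrBl mulf_eq0.
  by rewrite subr_eq0 (negPf mu_l).
by rewrite mx_funE -!mulmxA -/s hs -scalemxAr mulmxA UUt mul1mx.
Qed.

End matrix_functional_calculus.

Section step_functions.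
Variables (R : realType) (n : nat).
Local Notation mu := (@lebesgue_measure R).
Local Notation I01 := (`[(0:R), 1]%classic).
Local Notation integrable01 f := (mu.-integrable I01 (EFin \o f)).

Lemma chiP_indicE (i : 'I_n) :
  chiP i = \1_(`[i%:R / n%:R, i.+1%:R / n%:R[%classic) :> (R -> R).
Proof.
apply/funext => u; rewrite indicE /chiP; congr (nat_of_bool _)%:R.
by apply/idP/idP; rewrite inE /= in_itv.
Qed.

Lemma measurable_chiP (D : set R) (i : 'I_n) : measurable_fun D (chiP i).
Proof. by rewrite chiP_indicE; apply: measurable_indic; exact: measurable_itv. Qed.

Lemma chiP_ge0 (i : 'I_n) (u : R) : 0 <= chiP i u.
Proof. exact: ler0n. Qed.

Lemma chiP_le1 (i : 'I_n) (u : R) : chiP i u <= 1.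
Proof. by rewrite /chiP -[1]/(1%:R) ler_nat leq_b1. Qed.

Lemma integrable_chiP (i : 'I_n) : integrable01 (chiP i).
Proof.
apply: (@integrable01_bounded _ _ 1); first exact: measurable_chiP.
by move=> x _; rewrite ger0_norm ?chiP_ge0 ?chiP_le1.
Qed.

Lemma chiP_mul (i k : 'I_n) (u : R) : chiP i u * chiP k u = (i == k)%:R * chiP i u.
Proof.
have n_gt0 : (0 < n%:R :> R) by rewrite ltr0n (leq_ltn_trans _ (ltn_ord i)).
have [->|ik] := eqVneq i k; first by rewrite /chiP -!natrM; case: (_ <= _ < _).
rewrite mul0r /chiP.
wlog lt_ik : i k ik / (i < k)%N.
  move=> W; case: (ltngtP i k) => [|ki|/val_inj ik']; first exact: W.
    by rewrite mulrC; apply: W; rewrite // eq_sym.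
  by rewrite ik' eqxx in ik.
case: (boolP (_ <= u < _)) => [/andP[_ ui]|]; last by rewrite mul0r.
case: (boolP (_ <= u < _)) => [/andP[ku _]|]; last by rewrite mulr0.
have : i.+1%:R / n%:R <= k%:R / (n%:R : R) by rewrite ler_pM2r ?invr_gt0 ?ler_nat.
by rewrite leNgt (le_lt_trans ku ui).
Qed.

Lemma Rintegral_chiP (i : 'I_n) : Rintegral mu I01 (chiP i) = n%:R^-1.
Proof.
have n_gt0 : (0 < n%:R :> R) by rewrite ltr0n (leq_ltn_trans _ (ltn_ord i)).
rewrite /Rintegral chiP_indicE integral_indic; [|exact: measurable_I01|exact: measurable_itv].
rewrite setIidl; last first.
  move=> x /=; rewrite !in_itv /= => /andP[ix xi]; apply/andP; split.
    by apply: le_trans ix; rewrite divr_ge0.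
  by rewrite ltW // (lt_le_trans xi) // ler_pdivrMr // mul1r ler_nat.
have len : mu `[i%:R / n%:R, i.+1%:R / n%:R[%classic = (i.+1%:R / n%:R - i%:R / n%:R)%:E.
  by rewrite lebesgue_measure_itv /= lte_fin ltr_pM2r ?invr_gt0 // ltr_nat ltnSn -EFinB.
rewrite (_ : fine _ = fine (i.+1%:R / n%:R - i%:R / n%:R)%:E); last by congr fine; exact: len.
by rewrite /= -mulrBl -natrB // subSnn mul1r.
Qed.

Lemma integrable_chiP_mul (i : 'I_n) (g : R -> R) :
  integrable01 g -> integrable01 (fun u => chiP i u * g u).
Proof.
move=> ig; apply: le_integrable (ig) => //.
  apply/measurable_EFinP; apply: measurable_funM; first exact: measurable_chiP.
  by apply/measurable_EFinP; exact: measurable_int ig.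
move=> x _ /=; rewrite lee_fin normrM ger0_norm ?chiP_ge0 //.
by rewrite ler_piMl ?chiP_le1.
Qed.

Definition step (a : 'cV[R]_n) (x : R) : R := \sum_(i < n) a i 0 * chiP i x.

Definition chi_coef (g : R -> R) : 'cV[R]_n :=
  \col_i Rintegral mu I01 (fun u => chiP i u * g u).

Lemma measurable_step (D : set R) (a : 'cV[R]_n) : measurable_fun D (step a).
Proof.
apply: measurable_sum => i; apply: measurable_funM; first exact: measurable_cst.
exact: measurable_chiP.
Qed.

Lemma L2_step (a : 'cV[R]_n) : L2 (step a).
Proof.
have step_le x : `|step a x| <= \sum_i `|a i 0|.
  apply: le_trans (ler_norm_sum _ _ _) _; apply: ler_sum => i _.
  by rewrite normrM (ger0_norm (chiP_ge0 _ _)) ler_piMr ?chiP_le1.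
split; first exact: measurable_step.
have : integrable01 (fun x => step a x ^+ 2).
  apply: (@integrable01_bounded _ _ ((\sum_i `|a i 0|) ^+ 2)).
    by apply: measurable_funX; exact: measurable_step.
  by move=> x _; rewrite normrX lerXn2r ?nnegrE ?sumr_ge0.
have mstep2 : measurable_fun I01 (EFin \o (fun x => step a x ^+ 2)).
  by apply/measurable_EFinP; apply: measurable_funX; exact: measurable_step.
move=> /integrableP[_]; apply: le_lt_trans; apply: ge0_le_integral => //.
- by move=> x _; rewrite lee_fin sqr_ge0.
- exact: measurableT_comp.
- by move=> x _; rewrite /= lee_fin ler_norm.
Qed.

Lemma stepZ (k : R) (a : 'cV[R]_n) (x : R) : step (k *: a) x = k * step a x.
Proof. by rewrite /step mulr_sumr; apply: eq_bigr => i _; rewrite mxE mulrA. Qed.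

Lemma step_sum (I : Type) (r : seq I) (F : I -> 'cV[R]_n) (x : R) :
  step (\sum_(i <- r) F i) x = \sum_(i <- r) step (F i) x.
Proof.
rewrite /step; under eq_bigr do rewrite summxE mulr_suml.
by rewrite exchange_big.
Qed.

Lemma chiP_step (a : 'cV[R]_n) (i : 'I_n) (u : R) :
  chiP i u * step a u = a i 0 * chiP i u.
Proof.
rewrite /step mulr_sumr (bigD1 i) //= big1 ?addr0 => [|k ki].
  by rewrite mulrCA chiP_mul eqxx mul1r.
by rewrite mulrCA chiP_mul eq_sym (negPf ki) mul0r mulr0.
Qed.

Lemma chi_coef_step (a : 'cV[R]_n) : chi_coef (step (n%:R *: a)) = a.
Proof.
apply/matrixP => i j; rewrite (ord1 j) mxE.
have n_neq0 : n%:R != 0 :> R by rewrite pnatr_eq0 -lt0n (leq_ltn_trans _ (ltn_ord i)).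
under eq_Rintegral do rewrite chiP_step.
by rewrite RintegralZl ?integrable_chiP // Rintegral_chiP mxE mulrC mulKf.
Qed.

Lemma ip_step (g : R -> R) (a : 'cV[R]_n) :
  integrable01 g -> ip g (step a) = vdot a (chi_coef g).
Proof.
move=> ig; rewrite /ip vdotE.
have -> : (fun u => g u * step a u) = (fun u => \sum_i a i 0 * (chiP i u * g u)).
  by apply/funext => u; rewrite /step mulr_sumr; apply: eq_bigr => i _; ring.
rewrite Rintegral_sum // => [|i]; last exact/integrableZl_EFin/integrable_chiP_mul.
by apply: eq_bigr => i _; rewrite RintegralZl ?integrable_chiP_mul // mxE.
Qed.

Lemma T_op_graphon (M : 'M[R]_n) (g : R -> R) :
  integrable01 g -> T_op (graphon_of M) g = step (M *m chi_coef g).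
Proof.
move=> ig; apply/funext => v; rewrite /T_op /step.
have -> : (fun u => graphon_of M v u * g u) =
    (fun u => \sum_i \sum_j M i j * chiP i v * (chiP j u * g u)).
  apply/funext => u; rewrite /graphon_of mulr_suml; apply: eq_bigr => i _.
  by rewrite mulr_suml; apply: eq_bigr => j _; ring.
have int_term i j : integrable01 (fun u => M i j * chiP i v * (chiP j u * g u)).
  exact/integrableZl_EFin/integrable_chiP_mul.
rewrite Rintegral_sum // => [|i]; last exact: integrable_sumr.
apply: eq_bigr => i _; rewrite Rintegral_sum // !mxE mulr_suml.
by apply: eq_bigr => j _; rewrite RintegralZl ?integrable_chiP_mul // !mxE mulrAC.
Qed.

Lemma chi_coef_ae (f g : R -> R) : measurable_fun I01 f -> measurable_fun I01 g ->
  ae_eq01 f g -> chi_coef f = chi_coef g.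
Proof.
move=> mf mg fg; apply/matrixP => i j; rewrite !mxE; apply: ae_eq_Rintegral => //.
- by apply: measurable_funM => //; exact: measurable_chiP.
- by apply: measurable_funM => //; exact: measurable_chiP.
by move: fg; apply: filterS => x fgx Ix; rewrite fgx.
Qed.

Lemma chi_coefZ (k : R) (f : R -> R) :
  integrable01 f -> chi_coef (fun x => k * f x) = k *: chi_coef f.
Proof.
move=> fi; apply/matrixP => i j; rewrite !mxE -RintegralZl ?integrable_chiP_mul //.
by apply: eq_Rintegral => x _; rewrite mulrCA.
Qed.

Lemma chi_coef0 : chi_coef (fun _ => 0) = 0.
Proof.
apply/matrixP => i j; rewrite !mxE.
by under eq_Rintegral do rewrite mulr0; rewrite Rintegral_cst // mul0r.
Qed.

End step_functions.

Section graphon_eigenbasis.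
Variables (R : realType) (n : nat) (Delta : 'M[R]_n).
Variables (h : R -> R) (U : 'M[R]_n) (mu_ : 'I_n -> R).
Variables (phi : nat -> R -> R) (lam : nat -> R).
Hypothesis symDelta : Delta^T = Delta.
Hypothesis h0 : h 0 = 0.
Hypothesis Delta_eigenbasis : mx_ON_eigenbasis Delta U mu_.
Hypothesis eigenbasis : ON_eigenbasis (graphon_of (n%:R *: Delta)) phi lam.
Local Notation mu := (@lebesgue_measure R).
Local Notation I01 := (`[(0:R), 1]%classic).
Local Notation integrable01 f := (mu.-integrable I01 (EFin \o f)).
Local Notation c j := (chi_coef n (phi j)).

Lemma phi_integrable j : integrable01 (phi j).
Proof. by case: eigenbasis => L2phi _; exact: L2_integrable. Qed.

Lemma phi_measurable j : measurable_fun I01 (phi j).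
Proof. by case: eigenbasis => L2phi _; case: (L2phi j). Qed.

Lemma T_op_phi j :
  T_op (graphon_of (n%:R *: Delta)) (phi j) = step (n%:R *: (Delta *m c j)).
Proof. by rewrite T_op_graphon ?phi_integrable // -scalemxAl. Qed.

Lemma coef_eigenvector j : Delta *m c j = lam j *: c j.
Proof.
have [_ [_ [_ eig]]] := eigenbasis.
rewrite -[LHS]chi_coef_step -T_op_phi -(chi_coefZ n _ (phi_integrable j)).
apply: chi_coef_ae (eig j); last by apply: measurable_funM => //; exact: phi_measurable.
by rewrite T_op_phi; exact: measurable_step.
Qed.

Lemma eigenfunction_step j : lam j != 0 -> ae_eq01 (phi j) (step (n%:R *: c j)).
Proof.
move=> lam_neq0; have [_ [_ [_ eig]]] := eigenbasis.
move: (eig j); rewrite T_op_phi coef_eigenvector scalerA mulrC -scalerA.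
by apply: filterS => x + Ix => /(_ Ix); rewrite stepZ => /(mulfI lam_neq0) ->.
Qed.

Lemma ip_eigenfunction (psi : R -> R) j : integrable01 psi -> lam j != 0 ->
  ip psi (phi j) = vdot (n%:R *: c j) (chi_coef n psi).
Proof.
move=> psi_int lam_neq0; rewrite -ip_step //.
have mpsi : measurable_fun I01 psi by apply/measurable_EFinP; exact: measurable_int psi_int.
apply: ae_eq_Rintegral => //.
- by apply: measurable_funM => //; exact: phi_measurable.
- by apply: measurable_funM => //; exact: measurable_step.
by move: (eigenfunction_step lam_neq0); apply: filterS => x phix Ix; rewrite phix.
Qed.

Lemma coef_orthonormal k j : lam k != 0 -> vdot (n%:R *: c k) (c j) = (k == j)%:R.
Proof.
move=> lam_neq0; have [_ [ON _]] := eigenbasis.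
by rewrite -ip_eigenfunction ?phi_integrable // ON eq_sym.
Qed.

Lemma coef_complete (r : 'cV[R]_n) : (forall j, vdot r (c j) = 0) -> r = 0.
Proof.
move=> r_perp; have [_ [_ [complete _]]] := eigenbasis.
rewrite -[r]chi_coef_step -(chi_coef0 R n).
apply: chi_coef_ae; [exact: measurable_step|exact: measurable_cst|].
apply: complete; first exact: L2_step.
by move=> j; rewrite ipC ip_step ?phi_integrable // vdotZl r_perp mulr0.
Qed.

Lemma eigenvalues_eventually0 : exists N0, forall j, (N0 <= j)%N -> lam j = 0.
Proof.
have [N0 N0P] : exists N0, forall j, (N0 <= j)%N -> ~~ (lam j != 0).
  apply: (@bounded_count_eventually_false (fun j => lam j != 0) n) => N.
  rewrite -size_filter; set s := [seq j <- _ | _].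
  apply: (@biorthogonal_card_le _ _ _ (fun k => n%:R *: c (nth 0%N s k))
    (fun k => c (nth 0%N s k))) => k l.
  have : nth 0%N s k \in s by exact: mem_nth.
  rewrite mem_filter => /andP[lam_neq0 _].
  by rewrite coef_orthonormal // nth_uniq ?filter_uniq ?iota_uniq.
by exists N0 => j /N0P /negPn /eqP.
Qed.

Lemma mx_fun_expansion (v : 'cV[R]_n) N : (forall j, (N <= j)%N -> lam j = 0) ->
  n%:R *: (mx_fun h U mu_ *m v) =
  \sum_(k < N) (h (lam k) * vdot (n%:R *: c k) v) *: (n%:R *: c k).
Proof.
move=> lam_vanish.
suff -> : mx_fun h U mu_ *m v = \sum_(k < N) (h (lam k) * vdot (c k) v) *: (n%:R *: c k).
  rewrite scaler_sumr; apply: eq_bigr => k _.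
  by rewrite scalerA vdotZl mulrCA.
apply/eqP; rewrite -subr_eq0; apply/eqP/coef_complete => j.
have hv_j : vdot (mx_fun h U mu_ *m v) (c j) = h (lam j) * vdot (c j) v.
  rewrite vdotC vdot_mulmxr tr_mx_fun.
  by rewrite (mx_fun_eigenvector h symDelta Delta_eigenbasis (coef_eigenvector j)) vdotZl.
have term_j (k : 'I_N) : vdot ((h (lam k) * vdot (c k) v) *: (n%:R *: c k)) (c j) =
    h (lam k) * vdot (c k) v * (k == j :> nat)%:R.
  rewrite vdotZl; have [->|lam_neq0] := eqVneq (lam k) 0; first by rewrite h0 !mul0r.
  by rewrite coef_orthonormal.
rewrite vdotBl vdot_suml hv_j; under eq_bigr do rewrite term_j.
have [jN|Nj] := ltnP j N.
  rewrite (bigD1 (Ordinal jN)) //= eqxx mulr1 big1 ?addr0 ?subrr // => k kj.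
  by rewrite (_ : (k == j :> nat) = false) ?mulr0 //; apply/negbTE.
rewrite big1 ?lam_vanish ?h0 ?mul0r ?subr0 // => k _.
by rewrite (_ : (k == j :> nat) = false) ?mulr0 // ltn_eqF // (leq_trans (ltn_ord k)).
Qed.

Lemma measurable_fc_partial (psi : R -> R) N :
  measurable_fun I01 (fc_partial h phi lam psi N).
Proof.
apply: measurable_sum => k; apply: measurable_funM; first exact: measurable_cst.
exact: phi_measurable.
Qed.

Lemma fc_partial_ae (psi : R -> R) N : integrable01 psi ->
  ae_eq01 (fc_partial h phi lam psi N) (step (\sum_(k < N)
    (h (lam k) * vdot (n%:R *: c k) (chi_coef n psi)) *: (n%:R *: c k))).
Proof.
move=> psi_int.
have : {ae mu, forall x, forall k, I01 x ->
    h (lam k) * ip psi (phi k) * phi k x =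
    h (lam k) * vdot (n%:R *: c k) (chi_coef n psi) * step (n%:R *: c k) x}.
  apply: ae_foralln => k; have [->|lam_neq0] := eqVneq (lam k) 0.
    by apply: aeW => x _; rewrite h0 !mul0r.
  move: (eigenfunction_step lam_neq0); apply: filterS => x phix Ix.
  by rewrite phix // ip_eigenfunction.
apply: filterS => x terms Ix; rewrite /fc_partial step_sum.
by apply: eq_bigr => k _; rewrite stepZ terms.
Qed.

End graphon_eigenbasis.

Theorem proposition4p4 (R : realType) (n : nat) (Delta : 'M[R]_n)
  (h : R -> R) (U : 'M[R]_n) (mu_ : 'I_n -> R)
  (phi : nat -> R -> R) (lam : nat -> R) :
  Delta^T = Delta ->
  continuous h ->
  h 0 = 0 ->
  mx_ON_eigenbasis Delta U mu_ ->
  ON_eigenbasis (graphon_of (n%:R *: Delta)) phi lam ->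
  forall psi : R -> R, L2 psi ->
    (fun N => l2dist2 (fc_partial h phi lam psi N)
                      (T_op (graphon_of (n%:R *: mx_fun h U mu_)) psi))
      @ \oo --> (0 : R).
Proof.
move=> symDelta _ h0 Delta_eigenbasis eigenbasis psi psiL2.
have psi_int := L2_integrable psiL2.
have [N0 lam_vanish] := eigenvalues_eventually0 eigenbasis.
apply: cvg_near_cst; exists N0 => // N /= N0N.
rewrite T_op_graphon // -scalemxAl.
rewrite (mx_fun_expansion symDelta h0 Delta_eigenbasis eigenbasis _ (N := N)); last first.
  by move=> j Nj; apply: lam_vanish (leq_trans N0N Nj).
apply: l2dist2_ae_eq (fc_partial_ae h0 eigenbasis _ psi_int).
  exact: (measurable_fc_partial h eigenbasis psi N).
exact: measurable_step.
Qed.
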